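(* Under Assumption 1, for any choice of admissible input shares $a=(a_i)_{i\in M}$ and productivities $\lambda_i(a_i)>0$, the economy $\mathcal{E}(\lambda,a)$ has a general equilibrium, unique up to price normalization. Normalizing $p_0=1$: (1) the equilibrium revenues $\bar v_i:=\bar p_i\bar y_i$ ($i\in M$) satisfy $\begin{pmatrix}1\\ \bar v\end{pmatrix}=\tilde A\begin{pmatrix}1\\ \bar v\end{pmatrix}$, i.e. for all $j\in M$, $\bar v_j=a_{0,j}+a_{0,j}\sum_{i\in M}\varepsilon_i\bar v_i+\sum_{i\in M}a_{i,j}\bar v_i$, and $\sum_{i\in M}a_{i,0}\bar v_i=1$; (2) equilibrium profits are $\bar\pi_i=(1-\sum_{j\in N}a_{i,j})\bar v_i=(1-\sum_\ell b_{i,\ell})\bar v_i$; (3) equilibrium prices satisfy $\log(\bar p)=(A-I)^{-1}u+(A-I)^{-1}D\log(\bar v)$, where $\log(\bar p)$, $\log(\bar v)$ are taken coordinatewise over $M$, $u_i=\log\lambda_i(a_i)+\sum_{j\in N}a_{i,j}\log a_{i,j}$ (with $0\log 0=0$), and $D=\mathrm{diag}\big(\sum_{j\in N}a_{i,j}-1\big)_{i\in M}$.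
   Context: Economy: a representative household indexed $0$ and firms $M=\{1,\dots,m\}$; $N=M\cup\{0\}$, where index $0$ also denotes the labor good. Sectors: labor is sector $0$ with $M_0=\{0\}$; $M_\ell$ is the set of firms of sector $\ell$. The household supplies one unit of labor, receives all firms' profits, and has utility $u(x_0)=\prod_{j\in M}x_{0,j}^{a_{0,j}}$ with $a_0\in\mathbb{R}^M_+$, $\sum_j a_{0,j}=1$. Each firm $i$ has requirement vector $b_i\ge0$, $\sum_\ell b_{i,\ell}\le1$, and input shares $a_i\in\mathbb{R}^N_+$ with $\sum_{j\in M_\ell}a_{i,j}=b_{i,\ell}$ for every sector $\ell$; its production function is $f_{a,i}(x_i)=\lambda_i(a_i)\prod_{j\in N}x_{i,j}^{a_{i,j}}$. $\varepsilon_i:=1-\sum_{j\in N}a_{i,j}$. $A=(a_{i,j})_{i,j\in M}$. The economy $\mathcal{E}(\lambda,a)$: a general equilibrium is $(\bar p,\bar x,\bar y)$ with $\bar p\in\mathbb{R}^N_+$, $\bar y_0=1$, such that each firm $i$ maximizes $\bar p_iy_i-\bar p\cdot x_i$ subject to $y_i=f_{a,i}(x_i)$; the household maximizes $u(x_0)$ subject to $\bar p\cdot x_0\le \bar p_0+\sum_{j\in M}(\bar p_j\bar y_j-\bar p\cdot\bar x_j)$; and markets clear: $\sum_{j\in N}\bar x_{j,i}=\bar y_i$ for all $i\in N$. The matrix $\tilde A$ on $N\times N$: $\tilde A_{0,0}=0$, $\tilde A_{0,j}=a_{j,0}$, $\tilde A_{i,0}=a_{0,i}$, $\tilde A_{i,j}=a_{j,i}+\varepsilon_ja_{0,i}$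 ($i,j\in M$). Assumption 1: $a_0\in\mathbb{R}^M_{++}$; $b_{i,0}>0$ for all $i$; some firm $i_0$ has $b_{i_0,\ell}>0$ for some sector $\ell\ne0$. *)

From HB Require Import structures.
From mathcomp Require Import all_boot all_order all_algebra.
From mathcomp Require Import reals exp.
Set Implicit Arguments. Unset Strict Implicit. Unset Printing Implicit Defensive.
Import Order.TTheory GRing.Theory Num.Theory.
Local Open Scope ring_scope.

(* Firms are indexed by 'I_m (firm i of the paper is i+1).
   Goods (= the index set N) are indexed by 'I_m.+1 : good [lab] = ord0 is
   labor (index 0), good [gd i] = lift ord0 i is the product of firm i.
   Non-labor sectors are indexed by 'I_k; [sec j] is the sector of firm j
   (labor sector 0 = {0} is treated separately).
   a0 : 'I_m -> R            household Cobb-Douglas shares a_{0,j}, j in M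
   a  : 'I_m -> 'I_m.+1 -> R  input shares a_{i,j}, j in N
   b0 : 'I_m -> R            labor requirement b_{i,0}
   b  : 'I_m -> 'I_k -> R    sector requirements b_{i,l}, l <> 0
   lam : 'I_m -> ('I_m.+1 -> R) -> R   productivity functions lambda_i(.) *)

Definition lab {m : nat} : 'I_m.+1 := ord0.
Definition gd {m : nat} (i : 'I_m) : 'I_m.+1 := lift ord0 i.

Section Economy.
Variables (R : realType) (m k : nat).

Definition dotp (p z : 'I_m.+1 -> R) : R := \sum_(j < m.+1) p j * z j.

Definition prodfun (a : 'I_m -> 'I_m.+1 -> R) (lam : 'I_m -> ('I_m.+1 -> R) -> R)
  (i : 'I_m) (z : 'I_m.+1 -> R) : R :=
  lam i (a i) * \prod_(j < m.+1) powR (z j) (a i j).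

Definition utility (a0 : 'I_m -> R) (z : 'I_m.+1 -> R) : R :=
  \prod_(j < m) powR (z (gd j)) (a0 j).

Definition nonneg (z : 'I_m.+1 -> R) : Prop := forall j, 0 <= z j.

Definition profit (p : 'I_m.+1 -> R) (i : 'I_m) (yi : R) (xi : 'I_m.+1 -> R) : R :=
  p (gd i) * yi - dotp p xi.

Definition admissible (sec : 'I_m -> 'I_k) (a : 'I_m -> 'I_m.+1 -> R)
  (b0 : 'I_m -> R) (b : 'I_m -> 'I_k -> R) : Prop :=
  [/\ forall i j, 0 <= a i j,
      forall i, 0 <= b0 i /\ forall l, 0 <= b i l,
      forall i, b0 i + \sum_(l < k) b i l <= 1,
      forall i, a i lab = b0 i &
      forall i l, \sum_(j < m | sec j == l) a i (gd j) = b i l].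

Definition assumption1 (a0 : 'I_m -> R) (b0 : 'I_m -> R) (b : 'I_m -> 'I_k -> R) : Prop :=
  [/\ (forall j, 0 < a0 j), \sum_(j < m) a0 j = 1,
      (forall i, 0 < b0 i) & exists i0 l, 0 < b i0 l].

(* General equilibrium (p, x, y) of E(lambda, a):
   p : prices of goods in N; x0 : household bundle; x i : input bundle of firm i;
   y i : output of firm i (household labor supply y_0 = 1). *)
Definition equilibrium (a0 : 'I_m -> R) (a : 'I_m -> 'I_m.+1 -> R)
  (lam : 'I_m -> ('I_m.+1 -> R) -> R)
  (p : 'I_m.+1 -> R) (x0 : 'I_m.+1 -> R) (x : 'I_m -> 'I_m.+1 -> R) (y : 'I_m -> R) : Prop :=
  [/\ nonneg p /\ nonneg x0 /\ (forall i, nonneg (x i)),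
      (forall i, y i = prodfun a lam i (x i)) /\
      (forall i (z : 'I_m.+1 -> R), nonneg z ->
          profit p i (prodfun a lam i z) z <= profit p i (y i) (x i)),
      (let income := p lab + \sum_(i < m) profit p i (y i) (x i) in
       dotp p x0 <= income /\
       forall z, nonneg z -> dotp p z <= income -> utility a0 z <= utility a0 x0) &
      x0 lab + \sum_(i < m) x i lab = 1 /\
      forall j, x0 (gd j) + \sum_(i < m) x i (gd j) = y j].

Definition xlnx (t : R) : R := if t == 0 then 0 else t * ln t.

End Economy.

From HB Require Import structures.
From mathcomp Require Import all_boot all_order all_algebra.
From mathcomp Require Import boolp reals exp sequences.
From mathcomp Require Import ring lra.
Set Implicit Arguments. Unset Strict Implicit. Unset Printing Implicit Defensive.
Import Order.TTheory GRing.Theory Num.Theory.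
Local Open Scope ring_scope.

(* Cobb-Douglas technologies and preferences make every agent spend fixed shares
   of its budget: firm [i] spends [a i j * v i] on input [j] (a first-order
   condition) and the household spends [a0 j * I] on good [j] (the equality case
   of AM-GM).  Market clearing then becomes the linear system
   [v j = a0 j * I + \sum_i a i (gd j) * v i] for the revenues; it has a unique
   positive solution up to scale because every firm uses labor, so that [A] is
   strictly substochastic, and labor clearing fixes the scale.  With [y i]
   evaluated at the factor demands, [p (gd i) * y i = v i] is log-linear in the
   prices, namely [(A - 1) log p = u + D log v] with [A - 1] invertible.
   Conversely, by concavity of [ln], the allocation built from these revenues
   and prices is an equilibrium. *)

(** * Inequalities for [ln] and [powR] *)

Section RealFacts.
Variable R : realType.
Implicit Types c d e r v w x : R.

Lemma powR_expR x c : 0 < x \/ c = 0 -> powR x c = expR (c * ln x).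
Proof.
rewrite /powR; case: eqP => [->|_ _]; last by [].
case=> [|->]; first by rewrite ltxx.
by rewrite eqxx mul0r expR0.
Qed.

Lemma ln_le_subr1 x : 0 < x -> ln x <= x - 1.
Proof.
move=> x0; have := @le_ln1Dx R (x - 1); rewrite addrCA subrr addr0.
by apply; lra.
Qed.

Lemma ln_lt_subr1 x : 0 < x -> x != 1 -> ln x < x - 1.
Proof.
move=> x0 x1; have h : ln x != 0 by rewrite ln_eq0.
by have := expR_gt1Dx h; rewrite lnK ?posrE //; lra.
Qed.

Lemma powR_ge1D r c : 0 <= c -> 0 < r -> 1 + c * (1 - r^-1) <= powR r c.
Proof.
move=> c0 r0; rewrite powR_expR; last by left.
apply: le_trans (expR_ge1Dx _); rewrite lerD2l ler_wpM2l //.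
have := @ln_le_subr1 r^-1; rewrite invr_gt0 lnV ?posrE // => /(_ r0); lra.
Qed.

(* The inequality says that [r |-> c (r - 1)] lies below [r |-> w r (r - 1)],
   two functions vanishing at [r = 1]; comparing slopes there forces [c = w]. *)
Lemma eq_of_slope_le c w :
  (forall r, 0 < r -> c * (r - 1) <= w * r * (r - 1)) -> c = w.
Proof.
move=> H; have [cw|cw|//] := ltgtP c w; exfalso.
- pose e := w - c + 2 * (`|w| + 1); pose d := (w - c) / e.
  have e0 : 0 < e by rewrite /e; have := normr_ge0 w; lra.
  have de : d * e = w - c by rewrite /d mulfVK ?gt_eqF.
  have d0 : 0 < d by rewrite /d divr_gt0 ?subr_gt0.
  have d1 : d < 1 by rewrite /d ltr_pdivrMr // mul1r /e; have := normr_ge0 w; lra.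
  have wd : `|w| * d < w - c.
    by rewrite -de mulrC ltr_pM2l // /e; have := normr_ge0 w; lra.
  have := H (1 - d); rewrite subr_gt0 => /(_ d1).
  have -> : c * (1 - d - 1) = - (c * d) by ring.
  have -> : w * (1 - d) * (1 - d - 1) = - ((w - w * d) * d) by ring.
  rewrite lerN2 ler_pM2r // => h.
  have : w * d <= `|w| * d by rewrite ler_wpM2r ?ler_norm // ltW.
  lra.
- pose e := c - w + 2 * (`|w| + 1); pose d := (c - w) / e.
  have e0 : 0 < e by rewrite /e; have := normr_ge0 w; lra.
  have de : d * e = c - w by rewrite /d mulfVK ?gt_eqF.
  have d0 : 0 < d by rewrite /d divr_gt0 ?subr_gt0.
  have wd : `|w| * d < c - w.
    by rewrite -de mulrC ltr_pM2l // /e; have := normr_ge0 w; lra.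
  have := H (1 + d) ltac:(lra).
  have -> : c * (1 + d - 1) = c * d by ring.
  have -> : w * (1 + d) * (1 + d - 1) = (w + w * d) * d by ring.
  rewrite ler_pM2r // => h.
  have : w * d <= `|w| * d by rewrite ler_wpM2r ?ler_norm // ltW.
  lra.
Qed.

(* The first-order condition for maximizing [v r^c - w r] at [r = 1]. *)
Lemma powR_foc c v w : 0 <= c -> 0 <= v ->
  (forall r, 0 < r -> v * (powR r c - 1) <= w * (r - 1)) -> c * v = w.
Proof.
move=> c0 v0 H; apply: eq_of_slope_le => r r0.
have h : v * (c * (1 - r^-1)) <= w * (r - 1).
  apply: le_trans (H r r0); rewrite ler_wpM2l //; have := @powR_ge1D r c c0 r0; lra.
have -> : c * v * (r - 1) = v * (c * (1 - r^-1)) * r by field; rewrite gt_eqF.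
have -> : w * r * (r - 1) = w * (r - 1) * r by ring.
by rewrite ler_wpM2r // ltW.
Qed.

(* Concavity of [ln] for the weights [w] together with an extra weight [e]
   placed at the point [1]. *)
Lemma wsum_ln_le n (w t : 'I_n -> R) e :
  (forall j, 0 <= w j) -> 0 <= e -> \sum_j w j + e = 1 ->
  (forall j, 0 < w j -> 0 < t j) -> 0 < \sum_j w j * t j + e ->
  \sum_j w j * ln (t j) <= ln (\sum_j w j * t j + e).
Proof.
move=> w0 e0 sw tp; set M := (X in ln X) => M0.
have H j : w j * ln (t j) <= w j * ln M + (w j * t j / M - w j).
  have [->|wn] := eqVneq (w j) 0; first by rewrite !mul0r subr0 addr0.
  have wp : 0 < w j by rewrite lt_def wn w0.
  have := @ln_le_subr1 (t j / M); rewrite ln_div ?posrE ?tp // => /(_ (divr_gt0 (tp j wp) M0)).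
  move=> /(ler_wpM2l (ltW wp)); rewrite -mulrA; lra.
have : \sum_j w j * ln (t j) <= \sum_j (w j * ln M + (w j * t j / M - w j)).
  by apply: ler_sum => j _; exact: H.
rewrite big_split /= sumrB -!mulr_suml.
have hX : (\sum_i w i * t i) / M = 1 - e / M.
  have -> : \sum_i w i * t i = M - e by rewrite /M addrK.
  by field; rewrite gt_eqF.
have he : - (e * ln M) <= e * (M^-1 - 1).
  rewrite -mulrN -lnV ?posrE // ler_wpM2l //.
  by apply: ln_le_subr1; rewrite invr_gt0.
have hW : \sum_i w i = 1 - e by lra.
rewrite hX hW; move: he; rewrite -[e / M]/(e * M^-1); lra.
Qed.

(* Equality case of the weighted AM-GM inequality, with slack [d]. *)
Lemma wsum_ln_ge0_eq n (w t : 'I_n -> R) d :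
  (forall j, 0 < w j) -> (forall j, 0 < t j) -> \sum_j w j = 1 ->
  0 <= \sum_j w j * ln (t j) -> \sum_j w j * t j + d <= 1 -> 0 <= d ->
  (forall j, t j = 1) /\ d = 0.
Proof.
move=> wp tp sw sl st d0.
have T j : 0 <= w j * (t j - 1 - ln (t j)).
  by apply: mulr_ge0; [exact: ltW | have := @ln_le_subr1 _ (tp j); lra].
have E : \sum_j w j * (t j - 1 - ln (t j)) =
    \sum_j w j * t j - \sum_j w j - \sum_j w j * ln (t j).
  by rewrite -!sumrB; apply: eq_bigr => j _; ring.
have S0 : 0 <= \sum_j w j * (t j - 1 - ln (t j)) by apply: sumr_ge0.
have Z : \sum_j w j * (t j - 1 - ln (t j)) = 0 by lra.
split=> [j|]; last by lra.
move/eqP: (psumr_eq0P (fun j _ => T j) Z (i := j) isT).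
rewrite mulf_eq0 gt_eqF //= => /eqP h.
apply/eqP; apply: contraT => tn; have := @ln_lt_subr1 _ (tp j) tn; lra.
Qed.

Lemma powR_unbounded T {K c} : 0 < K -> 0 < c ->
  exists2 r, 0 <= r & T < K * powR r c.
Proof.
move=> K0 c0; exists (powR ((`|T| + 1) / K) c^-1); first exact: powR_ge0.
rewrite -powRrM mulVf ?gt_eqF // powRr1; last first.
  by rewrite divr_ge0 // ?ltW // ltr_wpDl.
rewrite mulrCA divff ?gt_eqF // mulr1; have := ler_norm T; lra.
Qed.

Lemma sumr_gt0_term n (F : 'I_n -> R) j0 :
  (forall j, 0 <= F j) -> 0 < F j0 -> 0 < \sum_j F j.
Proof.
move=> F0 Fj0; rewrite (bigD1 j0) //=; apply: ltr_pwDl => //.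
exact: sumr_ge0.
Qed.

End RealFacts.

(** * Goods vectors *)

Definition upd {T : Type} {n : nat} (z : 'I_n -> T) (j0 : 'I_n) (t : T) : 'I_n -> T :=
  fun l => if l == j0 then t else z l.

Lemma big_upd {T V : Type} (idx : V) (op : Monoid.com_law idx) n
    (F : 'I_n -> T -> V) (z : 'I_n -> T) j0 t :
  \big[op/idx]_l F l (upd z j0 t l) = op (F j0 t) (\big[op/idx]_(l | l != j0) F l (z l)).
Proof.
rewrite (bigD1 j0) //= /upd eqxx; congr (op _ _).
by apply: eq_bigr => l /negPf ->.
Qed.

Definition goodsv {T : Type} {m : nat} (t0 : T) (f : 'I_m -> T) : 'I_m.+1 -> T :=
  fun l => if unlift ord0 l is Some j then f j else t0.

Lemma goodsv_lab {T : Type} {m : nat} (t0 : T) (f : 'I_m -> T) : goodsv t0 f lab = t0.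
Proof. by rewrite /goodsv unlift_none. Qed.

Lemma goodsv_gd {T : Type} {m : nat} (t0 : T) (f : 'I_m -> T) j : goodsv t0 f (gd j) = f j.
Proof. by rewrite /goodsv /gd liftK. Qed.

Lemma goods_ind {m : nat} (P : 'I_m.+1 -> Prop) :
  P lab -> (forall j, P (gd j)) -> forall l, P l.
Proof. by move=> h0 h l; case: (unliftP ord0 l) => [j ->|->]; [exact: h | exact: h0]. Qed.

Section Economy.
Variables (R : realType) (m k : nat) (sec : 'I_m -> 'I_k)
  (a0 : 'I_m -> R) (a : 'I_m -> 'I_m.+1 -> R) (b0 : 'I_m -> R) (b : 'I_m -> 'I_k -> R)
  (lam : 'I_m -> ('I_m.+1 -> R) -> R).
Hypothesis HA1 : assumption1 a0 b0 b.
Hypothesis HAd : admissible sec a b0 b.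
Hypothesis Hlam : forall i, 0 < lam i (a i).

Lemma a0_gt0 j : 0 < a0 j. Proof. by case: HA1. Qed.
Lemma sum_a0 : \sum_j a0 j = 1. Proof. by case: HA1. Qed.
Lemma a_ge0 i j : 0 <= a i j. Proof. by case: HAd. Qed.
Lemma a_lab i : a i lab = b0 i. Proof. by case: HAd. Qed.
Lemma a_lab_gt0 i : 0 < a i lab. Proof. by rewrite a_lab; case: HA1. Qed.

(* The degree of homogeneity of [prodfun a lam i]; the paper's [eps_i] is [1 - homdeg i]. *)
Definition homdeg i := \sum_(j < m.+1) a i j.

Lemma homdeg_lab_gd i : homdeg i = a i lab + \sum_(j < m) a i (gd j).
Proof. by rewrite /homdeg big_ord_recl. Qed.

Lemma homdeg_sectors i : homdeg i = b0 i + \sum_(l < k) b i l.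
Proof.
rewrite homdeg_lab_gd a_lab; congr (_ + _).
rewrite (partition_big sec predT) //=; apply: eq_bigr => l _.
by case: HAd => _ _ _ _ ->.
Qed.

Lemma homdeg_le1 i : homdeg i <= 1. Proof. by rewrite homdeg_sectors; case: HAd. Qed.

Lemma sum_a_gd_le i : \sum_(j < m) a i (gd j) <= 1 - a i lab.
Proof. have := homdeg_le1 i; rewrite homdeg_lab_gd; lra. Qed.

Lemma dotpE (p z : 'I_m.+1 -> R) :
  dotp p z = p lab * z lab + \sum_(j < m) p (gd j) * z (gd j).
Proof. by rewrite /dotp big_ord_recl. Qed.

Lemma prodfun_ge0 i z : 0 <= prodfun a lam i z.
Proof. by apply: mulr_ge0; [exact: ltW | apply: prodr_ge0 => j _; exact: powR_ge0]. Qed.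

Lemma prodfun0 i : prodfun a lam i (fun _ => 0) = 0.
Proof.
have h := a_lab_gt0 i.
by rewrite /prodfun big_ord_recl powR0 ?gt_eqF // mul0r mulr0.
Qed.

Lemma prodfun_expR i z : (forall j, 0 < a i j -> 0 < z j) ->
  prodfun a lam i z = lam i (a i) * expR (\sum_j a i j * ln (z j)).
Proof.
move=> zp; rewrite /prodfun expR_sum; congr (_ * _); apply: eq_bigr => j _.
apply: powR_expR; have [->|an] := eqVneq (a i j) 0; first by right.
by left; apply: zp; rewrite lt_def an a_ge0.
Qed.

Lemma utility_ge0 z : 0 <= utility a0 z.
Proof. by apply: prodr_ge0 => j _; exact: powR_ge0. Qed.

Lemma utility_expR z : (forall j, 0 < z (gd j)) ->
  utility a0 z = expR (\sum_j a0 j * ln (z (gd j))).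
Proof.
move=> zp; rewrite expR_sum /utility; apply: eq_bigr => j _.
by rewrite powR_expR //; left.
Qed.

Lemma utility_eq0 z j : z (gd j) = 0 -> utility a0 z = 0.
Proof.
by move=> zj; rewrite /utility (bigD1 j) //= zj powR0 ?gt_eqF ?a0_gt0 // mul0r.
Qed.

Definition income p (x : 'I_m -> 'I_m.+1 -> R) y :=
  p lab + \sum_(i < m) profit p i (y i) (x i).

(* Cobb-Douglas demand of the household with income [I], and factor demand of
   firm [i] when its revenue is [v i]. *)
Definition cd_demand (p : 'I_m.+1 -> R) I : 'I_m.+1 -> R :=
  goodsv 0 (fun j => a0 j * I / p (gd j)).
Definition factor_demand (p : 'I_m.+1 -> R) (v : 'I_m -> R) i j := a i j * v i / p j.

Lemma dotp_cd_demand p I : (forall j, 0 < p (gd j)) -> dotp p (cd_demand p I) = I.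
Proof.
move=> pp; rewrite dotpE /cd_demand goodsv_lab mulr0 add0r.
under eq_bigr do rewrite goodsv_gd mulrC divfK ?gt_eqF //.
by rewrite -mulr_suml sum_a0 mul1r.
Qed.

Lemma dotp_factor_demand p v i : (forall j, 0 < p j) ->
  dotp p (factor_demand p v i) = homdeg i * v i.
Proof.
move=> pp; rewrite /dotp /homdeg mulr_suml; apply: eq_bigr => j _.
by rewrite /factor_demand mulrC divfK ?gt_eqF.
Qed.

(** * Equilibrium conditions *)

Section Equilibrium.
Variables (p x0 : 'I_m.+1 -> R) (x : 'I_m -> 'I_m.+1 -> R) (y : 'I_m -> R).
Hypothesis Heq : equilibrium a0 a lam p x0 x y.

Lemma p_ge0 j : 0 <= p j. Proof. by case: Heq => [[H _] _ _ _]. Qed.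
Lemma x0_ge0 j : 0 <= x0 j. Proof. by case: Heq => [[_ [H _]] _ _ _]. Qed.
Lemma x_ge0 i j : 0 <= x i j. Proof. by case: Heq => [[_ [_ H]] _ _ _]; apply: H. Qed.
Lemma y_prodfun i : y i = prodfun a lam i (x i). Proof. by case: Heq => [_ [H _] _ _]. Qed.
Lemma profit_max i z : nonneg z ->
  profit p i (prodfun a lam i z) z <= profit p i (y i) (x i).
Proof. by case: Heq => [_ [_ H] _ _]; apply: H. Qed.
Lemma budget : dotp p x0 <= income p x y. Proof. by case: Heq => [_ _ [H _] _]. Qed.
Lemma utility_max z : nonneg z -> dotp p z <= income p x y -> utility a0 z <= utility a0 x0.
Proof. by case: Heq => [_ _ [_ H] _]; apply: H. Qed.
Lemma labor_clear : x0 lab + \sum_i x i lab = 1. Proof. by case: Heq => [_ _ _ [H _]]. Qed.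
Lemma goods_clear j : x0 (gd j) + \sum_i x i (gd j) = y j.
Proof. by case: Heq => [_ _ _ [_ H]]. Qed.

Lemma y_ge0 i : 0 <= y i. Proof. by rewrite y_prodfun prodfun_ge0. Qed.

Lemma profit_ge0 i : 0 <= profit p i (y i) (x i).
Proof.
have := @profit_max i (fun _ => 0) (fun _ => lexx 0).
by rewrite /profit prodfun0 /dotp big1 ?mulr0 ?subr0 // => j _; rewrite mulr0.
Qed.

(* With free labor, firm [i] would make unbounded profits from labor alone. *)
Lemma p_gd_eq0 : p lab = 0 -> forall i, p (gd i) = 0.
Proof.
move=> p0 i; apply/eqP; rewrite eq_le p_ge0 andbT leNgt; apply/negP => pi.
pose K := \sum_(l | l != lab) p l * 1.
have [r r0 hr] := powR_unbounded (profit p i (y i) (x i) + K)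
  (mulr_gt0 pi (Hlam i)) (a_lab_gt0 i).
have hn : nonneg (upd (fun _ : 'I_m.+1 => 1) lab r).
  by move=> l; rewrite /upd; case: ifP => _; [exact: r0 | exact: ler01].
have := profit_max i hn.
rewrite /profit /dotp (big_upd _ (fun l t => p l * t)) /prodfun.
rewrite (big_upd _ (fun l t => powR t (a i l))) /= big1 ?mulr1; last first.
  by move=> l _; rewrite powR1.
rewrite p0 mul0r add0r -/K mulrA; rewrite /profit /dotp in hr; lra.
Qed.

(* Free labor would make all prices vanish, so any bundle would be affordable. *)
Lemma p_lab_gt0 : 0 < p lab.
Proof.
rewrite lt_def p_ge0 andbT; apply/eqP => p0.
have pz : forall l, p l = 0 by apply: goods_ind => //; exact: p_gd_eq0.
have I0 : income p x y = 0.
  rewrite /income p0 add0r big1 // => i _.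
  by rewrite /profit /dotp pz mul0r big1 ?subrr // => l _; rewrite pz mul0r.
pose c := utility a0 x0 + 1.
have c0 : 0 < c by rewrite /c ltr_wpDl ?utility_ge0.
have := @utility_max (fun _ => c) (fun _ => ltW c0).
rewrite I0 /dotp big1 ?lexx; last by move=> l _; rewrite pz mul0r.
move=> /(_ isT); rewrite utility_expR // -mulr_suml sum_a0 mul1r lnK ?posrE //.
rewrite /c; lra.
Qed.

Lemma income_gt0 : 0 < income p x y.
Proof.
apply: lt_le_trans p_lab_gt0 _; rewrite /income lerDl.
by apply: sumr_ge0 => i _; exact: profit_ge0.
Qed.

(* With good [j] free, the household could consume it in unbounded amounts. *)
Lemma p_gd_gt0 j : 0 < p (gd j).
Proof.
rewrite lt_def p_ge0 andbT; apply/eqP => pj0.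
set I := income p x y; have I0 : 0 < I := income_gt0.
have pp l : 0 < p (gd l) + 1 by rewrite ltr_wpDl ?p_ge0.
pose f l := a0 l * I / (p (gd l) + 1).
have fp l : 0 < f l by rewrite /f divr_gt0 // mulr_gt0 // a0_gt0.
pose K := \prod_(l | l != j) powR (f l) (a0 l).
have K0 : 0 < K by apply: prodr_gt0 => l _; exact: powR_gt0.
have [r r0 hr] := powR_unbounded (utility a0 x0) K0 (a0_gt0 j).
pose z := goodsv 0 (upd f j r).
have hn : nonneg z.
  apply: goods_ind; first by rewrite /z goodsv_lab.
  by move=> l; rewrite /z goodsv_gd /upd; case: (l == j) => //; exact: ltW.
have hb : dotp p z <= I.
  rewrite dotpE /z goodsv_lab mulr0 add0r.
  apply: le_trans (_ : _ <= \sum_l a0 l * I) _; last by rewrite -mulr_suml sum_a0 mul1r.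
  apply: ler_sum => l _; rewrite goodsv_gd /upd; case: eqP => [->|_].
    by rewrite pj0 mul0r mulr_ge0 // ltW // a0_gt0.
  rewrite /f mulrCA ler_piMr ?mulr_ge0 ?(ltW I0) ?(ltW (a0_gt0 l)) //.
  by rewrite ler_pdivrMr // mul1r lerDl.
have := utility_max hn hb; rewrite /utility.
under eq_bigr do rewrite /z goodsv_gd.
rewrite (big_upd _ (fun l t => powR t (a0 l))) /= -/K mulrC.
rewrite /utility in hr; lra.
Qed.

Lemma p_gt0 l : 0 < p l.
Proof. by move: l; apply: goods_ind; [exact: p_lab_gt0 | exact: p_gd_gt0]. Qed.

(* First-order condition for scaling input [j] by a factor [r] at [r = 1]. *)
Lemma input_cost i j : p j * x i j = a i j * (p (gd i) * y i).
Proof.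
pose K := lam i (a i) * \prod_(l | l != j) powR (x i l) (a i l).
have yK t : prodfun a lam i (upd (x i) j t) = powR t (a i j) * K.
  by rewrite /prodfun (big_upd _ (fun l t => powR t (a i l))) /= /K; ring.
have yE : y i = powR (x i j) (a i j) * K.
  by rewrite y_prodfun /prodfun (bigD1 j) //= /K; ring.
have v0 : 0 <= p (gd i) * y i by rewrite mulr_ge0 ?p_ge0 ?y_ge0.
have [xz|xn] := eqVneq (x i j) 0.
  rewrite xz mulr0; have [->|an] := eqVneq (a i j) 0; first by rewrite mul0r.
  by rewrite yE xz powR0 // mul0r !mulr0.
have xp : 0 < x i j by rewrite lt_def xn x_ge0.
symmetry; apply: powR_foc; [exact: a_ge0 | exact: v0 | move=> r r0].
have hn : nonneg (upd (x i) j (r * x i j)).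
  rewrite /nonneg /upd => l; case: (l == j) => /=; last exact: x_ge0.
  by rewrite mulr_ge0 // ltW.
have := profit_max i hn.
rewrite /profit yK /dotp (big_upd _ (fun l t => p l * t)) /= [in X in _ <= X](bigD1 j) //=.
rewrite powRM ?(ltW r0) ?x_ge0 //.
have -> : p (gd i) * (powR r (a i j) * powR (x i j) (a i j) * K) =
   powR r (a i j) * (p (gd i) * y i) by rewrite yE; ring.
have -> : p j * (r * x i j) = r * (p j * x i j) by ring.
move=> h; rewrite mulrBr mulr1 mulrBr mulr1 [_ * powR _ _]mulrC [_ * r]mulrC; lra.
Qed.

Lemma x0_gd_gt0 j : 0 < x0 (gd j).
Proof.
set I := income p x y; have I0 : 0 < I := income_gt0.
have zp l : 0 < cd_demand p I (gd l).
  by rewrite /cd_demand goodsv_gd divr_gt0 ?p_gd_gt0 // mulr_gt0 // a0_gt0.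
have zn : nonneg (cd_demand p I).
  by apply: goods_ind => [|l]; [rewrite /cd_demand goodsv_lab | exact: ltW].
have := utility_max zn; rewrite dotp_cd_demand ?lexx => [/(_ isT)|]; last exact: p_gd_gt0.
rewrite lt_def x0_ge0 andbT; apply: contraTneq => /(utility_eq0) ->.
by rewrite utility_expR // -ltNge expR_gt0.
Qed.

Lemma household_demand :
  x0 lab = 0 /\ forall j, p (gd j) * x0 (gd j) = a0 j * income p x y.
Proof.
set I := income p x y; have I0 : 0 < I := income_gt0.
set zs := cd_demand p I.
have zsE l : zs (gd l) = a0 l * I / p (gd l) by rewrite /zs /cd_demand goodsv_gd.
have zsp l : 0 < zs (gd l) by rewrite zsE divr_gt0 ?p_gd_gt0 // mulr_gt0 // a0_gt0.
have zn : nonneg zs by apply: goods_ind => [|l]; [rewrite /zs /cd_demand goodsv_lab | exact: ltW].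
have := utility_max zn; rewrite dotp_cd_demand ?lexx => [/(_ isT)|]; last exact: p_gd_gt0.
rewrite (utility_expR zsp) (utility_expR x0_gd_gt0) ler_expR => hu.
pose t l := x0 (gd l) / zs (gd l).
have tp l : 0 < t l by rewrite divr_gt0 ?x0_gd_gt0.
have h1 : 0 <= \sum_j a0 j * ln (t j).
  have -> : \sum_j a0 j * ln (t j) =
     \sum_j a0 j * ln (x0 (gd j)) - \sum_j a0 j * ln (zs (gd j)).
    by rewrite -sumrB; apply: eq_bigr => j _; rewrite /t ln_div ?posrE ?x0_gd_gt0 // mulrBr.
  by rewrite subr_ge0.
have h2 : \sum_j a0 j * t j + p lab * x0 lab / I <= 1.
  have -> : \sum_j a0 j * t j = (\sum_j p (gd j) * x0 (gd j)) / I.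
    rewrite mulr_suml; apply: eq_bigr => j _; rewrite /t zsE; field.
    by rewrite !gt_eqF ?a0_gt0 ?p_gd_gt0.
  by rewrite -mulrDl ler_pdivrMr // mul1r addrC -dotpE budget.
have h3 : 0 <= p lab * x0 lab / I by rewrite divr_ge0 ?mulr_ge0 ?p_ge0 ?x0_ge0 ?ltW.
have [t1 d0] := wsum_ln_ge0_eq a0_gt0 tp sum_a0 h1 h2 h3.
split.
  move/eqP: d0; rewrite mulf_eq0 invr_eq0 (gt_eqF I0) orbF mulf_eq0.
  by rewrite (gt_eqF p_lab_gt0) => /eqP.
move=> j; have := t1 j; rewrite /t => /divr1_eq ->.
by rewrite zsE mulrC divfK ?gt_eqF ?p_gd_gt0.
Qed.

Lemma profit_eq i : profit p i (y i) (x i) = (1 - homdeg i) * (p (gd i) * y i).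
Proof.
rewrite /profit /dotp; under eq_bigr do rewrite input_cost.
by rewrite -mulr_suml -/(homdeg i) mulrBl mul1r.
Qed.

Lemma income_eq : income p x y = p lab + \sum_i (1 - homdeg i) * (p (gd i) * y i).
Proof. by rewrite /income; congr (_ + _); apply: eq_bigr => i _; rewrite profit_eq. Qed.

Lemma revenue_eq j :
  p (gd j) * y j = a0 j * income p x y + \sum_i a i (gd j) * (p (gd i) * y i).
Proof.
rewrite -goods_clear mulrDr; case: household_demand => _ ->; congr (_ + _).
by rewrite mulr_sumr; apply: eq_bigr => i _; rewrite input_cost.
Qed.

Lemma labor_eq : \sum_i a i lab * (p (gd i) * y i) = p lab.
Proof.
have := congr1 (fun t => p lab * t) labor_clear; rewrite /= mulr1 mulrDr.
case: household_demand => -> _; rewrite mulr0 add0r mulr_sumr => <-.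
by apply: eq_bigr => i _; rewrite input_cost.
Qed.

Lemma revenue_gt0 j : 0 < p (gd j) * y j.
Proof.
rewrite revenue_eq ltr_pwDl ?mulr_gt0 ?a0_gt0 ?income_gt0 //.
by apply: sumr_ge0 => i _; rewrite mulr_ge0 ?a_ge0 ?mulr_ge0 ?p_ge0 ?y_ge0.
Qed.

Lemma x_factor_demand i : x i = factor_demand p (fun i => p (gd i) * y i) i.
Proof.
apply: funext => j; rewrite /factor_demand -input_cost mulrC mulKf //.
by rewrite gt_eqF ?p_gt0.
Qed.

Lemma revenue_share_eq j : (p (gd j) * y j) / income p x y =
  a0 j + \sum_i a i (gd j) * ((p (gd i) * y i) / income p x y).
Proof.
have I0 := income_gt0.
rewrite revenue_eq mulrDl mulfK ?gt_eqF //; congr (_ + _).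
by rewrite mulr_suml; apply: eq_bigr => i _; rewrite -mulrA.
Qed.

End Equilibrium.

(** * Revenues and prices *)

Lemma factor_demand_gt0 p v i j : (forall j, 0 < p j) -> 0 < v i ->
  0 < a i j -> 0 < factor_demand p v i j.
Proof. by move=> pp vi aj; rewrite divr_gt0 ?mulr_gt0. Qed.

Lemma ln_prodfun_factor_demand p v i : (forall j, 0 < p j) -> 0 < v i ->
  ln (prodfun a lam i (factor_demand p v i)) =
  ln (lam i (a i)) + \sum_j xlnx (a i j) + homdeg i * ln (v i) - \sum_j a i j * ln (p j).
Proof.
move=> pp vi; rewrite prodfun_expR => [|j]; last exact: factor_demand_gt0.
rewrite lnM ?posrE ?expR_gt0 // expRK -!addrA; congr (_ + _).
rewrite /homdeg mulr_suml -sumrB -big_split /=; apply: eq_bigr => j _.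
have [->|an] := eqVneq (a i j) 0; first by rewrite /xlnx eqxx !mul0r subr0 addr0.
have aj : 0 < a i j by rewrite lt_def an a_ge0.
rewrite /factor_demand /xlnx (negPf an) ln_div ?posrE ?mulr_gt0 //.
by rewrite lnM ?posrE //; ring.
Qed.

(* The revenue at the factor demand equals [v i] exactly when the right-hand
   side vanishes, i.e. when row [i] of [(A - 1) log p = u + D log v] holds. *)
Lemma ln_revenue_factor_demand p v i : (forall j, 0 < p j) -> 0 < v i ->
  ln (p (gd i) * prodfun a lam i (factor_demand p v i)) - ln (v i) =
  ln (lam i (a i)) + \sum_j xlnx (a i j) + (homdeg i - 1) * ln (v i)
  - a i lab * ln (p lab) - (\sum_(j < m) a i (gd j) * ln (p (gd j)) - ln (p (gd i))).
Proof.
move=> pp vi; have yp : 0 < prodfun a lam i (factor_demand p v i).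
  rewrite prodfun_expR ?mulr_gt0 ?expR_gt0 // => j.
  exact: factor_demand_gt0.
rewrite lnM ?posrE ?pp // ln_prodfun_factor_demand //.
have -> : \sum_j a i j * ln (p j) =
    a i lab * ln (p lab) + \sum_(j < m) a i (gd j) * ln (p (gd j)) by rewrite big_ord_recl.
ring.
Qed.

Lemma log_price_row p x0 x y : equilibrium a0 a lam p x0 x y -> forall i,
  \sum_(j < m) a i (gd j) * ln (p (gd j)) - ln (p (gd i)) =
  ln (lam i (a i)) + \sum_j xlnx (a i j) + (homdeg i - 1) * ln (p (gd i) * y i)
  - a i lab * ln (p lab).
Proof.
move=> Heq i; apply/eqP; rewrite eq_sym -subr_eq0; apply/eqP.
rewrite -(ln_revenue_factor_demand (v := fun i => p (gd i) * y i)) //.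
- by rewrite -(x_factor_demand Heq) -(y_prodfun Heq) subrr.
- exact: p_gt0 Heq.
- exact: (revenue_gt0 Heq i).
Qed.

(* Each column of [a i (gd j)] sums to at most [1 - a i lab < 1]; summing the
   inequality over [j] for the negative part [n] of [w] leaves
   [\sum_i a i lab * n i <= 0]. *)
Lemma subinvariant_ge0 (w : 'I_m -> R) :
  (forall j, \sum_i a i (gd j) * w i <= w j) -> forall j, 0 <= w j.
Proof.
move=> H; pose n i := Num.max (- w i) 0.
have n0 i : 0 <= n i by rewrite /n le_max lexx orbT.
have nw i : - w i <= n i by rewrite /n le_max lexx.
have Hn j : n j <= \sum_i a i (gd j) * n i.
  have s0 : 0 <= \sum_i a i (gd j) * n i.
    by apply: sumr_ge0 => i _; rewrite mulr_ge0 ?a_ge0.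
  rewrite [leLHS]/n ge_max s0 andbT.
  apply: le_trans (_ : - \sum_i a i (gd j) * w i <= _); first by rewrite lerN2.
  by rewrite -sumrN; apply: ler_sum => i _; rewrite -mulrN ler_wpM2l ?a_ge0.
have S : \sum_j n j <= \sum_i (1 - a i lab) * n i.
  apply: le_trans (ler_sum _ (fun j _ => Hn j)) _.
  rewrite exchange_big /=; apply: ler_sum => i _; rewrite -mulr_suml.
  by rewrite ler_wpM2r ?sum_a_gd_le.
have S2 : \sum_i (1 - a i lab) * n i = \sum_i n i - \sum_i a i lab * n i.
  by rewrite -sumrB; apply: eq_bigr => i _; ring.
have an0 i : 0 <= a i lab * n i by rewrite mulr_ge0 ?n0 ?ltW ?a_lab_gt0.
have Z : \sum_i a i lab * n i = 0.
  by apply/eqP; rewrite eq_le sumr_ge0 ?andbT //; lra.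
move=> j; move/eqP: (psumr_eq0P (fun i _ => an0 i) Z (i := j) isT).
rewrite mulf_eq0 gt_eqF ?a_lab_gt0 //= => /eqP nj; have := nw j; lra.
Qed.

Definition Amx : 'M[R]_m := \matrix_(i, j) a i (gd j).

Lemma mulmx_Amx (w : 'rV[R]_m) j : (w *m Amx) 0 j = \sum_i a i (gd j) * w 0 i.
Proof. by rewrite mxE; apply: eq_bigr => i _; rewrite mxE mulrC. Qed.

Lemma Amx_fixpoint_eq0 (w : 'rV[R]_m) : w *m Amx = w -> w = 0.
Proof.
move=> /rowP wA; apply/rowP => j; rewrite mxE.
have fix_ge0 (u : 'I_m -> R) : (forall l, u l = \sum_i a i (gd l) * u i) -> 0 <= u j.
  by move=> hu; apply: subinvariant_ge0 => l; rewrite -hu.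
have hw l : w 0 l = \sum_i a i (gd l) * w 0 i by rewrite -mulmx_Amx wA.
have hNw l : - w 0 l = \sum_i a i (gd l) * - w 0 i.
  by rewrite hw -sumrN; apply: eq_bigr => i _; rewrite mulrN.
have := fix_ge0 _ hw; have := fix_ge0 _ hNw; lra.
Qed.

Lemma Amx_sub1_unit : (Amx - 1%:M) \in unitmx.
Proof.
rewrite unitmxE unitfE; apply/negP => /det0P [w /negP w0 wA]; apply: w0.
apply/eqP/Amx_fixpoint_eq0/eqP.
by rewrite -subr_eq0 -{2}[w]mulmx1 -mulmxBr wA.
Qed.

Lemma revenue_share_unique (w w' : 'I_m -> R) :
  (forall j, w j = a0 j + \sum_i a i (gd j) * w i) ->
  (forall j, w' j = a0 j + \sum_i a i (gd j) * w' i) -> w =1 w'.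
Proof.
move=> hw hw' j; apply/eqP; rewrite -subr_eq0; apply/eqP.
have /(_ _)/rowP/(_ j) := @Amx_fixpoint_eq0 (\row_i (w i - w' i)); rewrite !mxE; apply.
apply/rowP => l; rewrite mulmx_Amx mxE.
under eq_bigr do rewrite mxE mulrBr.
by rewrite sumrB [in RHS]hw [in RHS]hw'; ring.
Qed.

(** * Uniqueness *)

Lemma equilibrium_scale p x0 x y (c : R) : 0 < c -> equilibrium a0 a lam p x0 x y ->
  equilibrium a0 a lam (fun j => c * p j) x0 x y.
Proof.
move=> c0 He.
have dE z : dotp (fun j => c * p j) z = c * dotp p z.
  by rewrite /dotp mulr_sumr; apply: eq_bigr => j _; rewrite mulrA.
have pE i yi xi : profit (fun j => c * p j) i yi xi = c * profit p i yi xi.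
  by rewrite /profit dE; ring.
have iE : income (fun j => c * p j) x y = c * income p x y.
  by rewrite /income mulrDr mulr_sumr; congr (_ + _); apply: eq_bigr => i _; rewrite pE.
split.
- split=> [j|]; first by rewrite mulr_ge0 ?(ltW c0) ?(p_ge0 He).
  by split=> [j|i j]; [exact: x0_ge0 He j | exact: x_ge0 He i j].
- split=> [|i z hz]; first exact: y_prodfun He.
  by rewrite !pE; apply: ler_wpM2l; [exact: ltW | exact: profit_max He i z hz].
- cbv zeta; rewrite -/(income (fun j => c * p j) x y) iE dE (ler_pM2l c0).
  split=> [|z hz]; first exact: budget He.
  by rewrite dE (ler_pM2l c0); exact: utility_max He z hz.
- by split; [exact: labor_clear He | exact: goods_clear He].
Qed.

Lemma normalized_equilibrium_props p x0 x y :
  equilibrium a0 a lam p x0 x y -> p lab = 1 ->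
  let v := fun i : 'I_m => p (gd i) * y i in
  let eps := fun i : 'I_m => 1 - \sum_(j < m.+1) a i j in
  [/\ (forall j : 'I_m,
         v j = a0 j + a0 j * \sum_(i < m) eps i * v i + \sum_(i < m) a i (gd j) * v i)
      /\ \sum_(i < m) a i lab * v i = 1,
      (forall i : 'I_m,
         profit p i (y i) (x i) = (1 - \sum_(j < m.+1) a i j) * v i
         /\ profit p i (y i) (x i) = (1 - (b0 i + \sum_(l < k) b i l)) * v i) &
      let A : 'M[R]_m := \matrix_(i, j) a i (gd j) in
      let u : 'cV[R]_m := \col_i (ln (lam i (a i)) + \sum_(j < m.+1) xlnx (a i j)) in
      let D : 'M[R]_m := diag_mx (\row_i (\sum_(j < m.+1) a i j - 1)) in
      let logp : 'cV[R]_m := \col_i ln (p (gd i)) in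
      let logv : 'cV[R]_m := \col_i ln (v i) in
      (A - 1%:M) \in unitmx /\
      logp = invmx (A - 1%:M) *m u + invmx (A - 1%:M) *m D *m logv].
Proof.
move=> He p1 v eps; split.
- split=> [j|]; last by rewrite -p1 -(labor_eq He).
  by rewrite /v (revenue_eq He) (income_eq He) p1 mulrDr mulr1.
- by move=> i; rewrite (profit_eq He) -homdeg_sectors.
- move=> A u D logp logv; split; first exact: Amx_sub1_unit.
  have rowE : (A - 1%:M) *m logp = u + D *m logv.
    apply/colP => i; rewrite mulmxBl mul1mx mul_diag_mx !mxE.
    have := log_price_row He i; rewrite p1 ln1 mulr0 subr0 => <-.
    by congr (_ - _); apply: eq_bigr => j _; rewrite !mxE.
  by rewrite -[logp](mulKmx Amx_sub1_unit) rowE mulmxDr mulmxA.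
Qed.

Lemma normalized_revenue_unique p x0 x y p' x0' x' y' :
  equilibrium a0 a lam p x0 x y -> equilibrium a0 a lam p' x0' x' y' ->
  p lab = 1 -> p' lab = 1 -> forall i, p (gd i) * y i = p' (gd i) * y' i.
Proof.
move=> He He' p1 p1'.
set I := income p x y; set I' := income p' x' y'.
have I0 : 0 < I := income_gt0 He; have I0' : 0 < I' := income_gt0 He'.
have ww i : p (gd i) * y i / I = p' (gd i) * y' i / I'.
  exact: (revenue_share_unique (revenue_share_eq He) (revenue_share_eq He')).
set S := \sum_i a i lab * (p (gd i) * y i / I).
have IS : I * S = 1.
  rewrite -p1 -(labor_eq He) mulr_sumr; apply: eq_bigr => i _.
  by field; rewrite gt_eqF.
have IS' : I' * S = 1.
  rewrite -p1' -(labor_eq He') mulr_sumr; apply: eq_bigr => i _; rewrite ww.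
  by field; rewrite gt_eqF.
have S0 : S != 0.
  by apply/eqP => S0; move: IS; rewrite S0 mulr0 => /eqP; rewrite eq_sym oner_eq0.
have II : I = I' by apply: (mulIf S0); rewrite IS IS'.
by move=> i; have := ww i; rewrite -II => /(mulIf (invr_neq0 (lt0r_neq0 I0))).
Qed.

Lemma normalized_equilibrium_unique p x0 x y p' x0' x' y' :
  equilibrium a0 a lam p x0 x y -> equilibrium a0 a lam p' x0' x' y' ->
  p lab = 1 -> p' lab = 1 -> [/\ p = p', x0 = x0', x = x' & y = y'].
Proof.
move=> He He' p1 p1'; have vv := normalized_revenue_unique He He' p1 p1'.
have pp : p = p'.
  apply: funext; apply: goods_ind => [|i]; first by rewrite p1 p1'.
  have [_ _ [_]] := normalized_equilibrium_props He p1.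
  have [_ _ [_]] := normalized_equilibrium_props He' p1'.
  move=> /= L' L.
  have lv : \col_i ln (p (gd i) * y i) = \col_i ln (p' (gd i) * y' i) :> 'cV[R]_m.
    by apply/colP => l; rewrite !mxE vv.
  move: L; rewrite lv -L' => /colP/(_ i); rewrite !mxE => /ln_inj; apply.
  - by rewrite posrE; exact: p_gd_gt0 He i.
  - by rewrite posrE; exact: p_gd_gt0 He' i.
subst p'; have yy : y = y'.
  apply: funext => i; apply: (@mulfI _ (p (gd i))); last exact: vv.
  by rewrite gt_eqF ?(p_gd_gt0 He).
subst y'.
have II : income p x y = income p x' y by rewrite (income_eq He) (income_eq He').
split=> //; last by apply: funext => i; rewrite (x_factor_demand He) (x_factor_demand He').
apply: funext; apply: goods_ind => [|j].
  by case: (household_demand He) => ->; case: (household_demand He') => ->.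
apply: (@mulfI _ (p (gd j))); first by rewrite gt_eqF ?(p_gd_gt0 He).
case: (household_demand He) => _ ->; case: (household_demand He') => _ ->.
by rewrite II.
Qed.

Lemma equilibrium_unique p x0 x y p' x0' x' y' :
  equilibrium a0 a lam p x0 x y -> equilibrium a0 a lam p' x0' x' y' ->
  exists2 c : R, 0 < c & [/\ forall j, p' j = c * p j, x0' = x0, x' = x & y' = y].
Proof.
move=> He He'; have P0 := p_lab_gt0 He; have P0' := p_lab_gt0 He'.
have Hq := equilibrium_scale (c := (p lab)^-1) ltac:(by rewrite invr_gt0) He.
have Hq' := equilibrium_scale (c := (p' lab)^-1) ltac:(by rewrite invr_gt0) He'.
have [||qq -> -> ->] := normalized_equilibrium_unique Hq Hq'; rewrite ?mulVf ?gt_eqF //.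
exists (p' lab / p lab); first by rewrite divr_gt0.
split=> // j; have := congr1 (fun f => p' lab * f j) qq.
by rewrite /= mulVKf ?gt_eqF // => <-; rewrite mulrA.
Qed.

(** * Existence *)

Lemma m_gt0 : (0 < m)%N.
Proof.
case: m a0 sum_a0 => [|//] f; rewrite big_ord0 => /eqP.
by rewrite eq_sym oner_eq0.
Qed.

Lemma revenue_share_exists : exists2 w : 'I_m -> R,
  forall j, 0 < w j & forall j, w j = a0 j + \sum_i a i (gd j) * w i.
Proof.
pose w := - (\row_j a0 j) *m invmx (Amx - 1%:M).
have : w *m (Amx - 1%:M) = - \row_j a0 j by exact: mulmxKV Amx_sub1_unit _.
clearbody w; rewrite mulmxBr mulmx1 => /rowP wA.
have hw j : w 0 j = a0 j + \sum_i a i (gd j) * w 0 i.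
  have := wA j; rewrite [LHS]mxE mulmx_Amx !mxE; lra.
have w0 : forall j, 0 <= w 0 j.
  by apply: subinvariant_ge0 => j; rewrite [leRHS]hw lerDr ltW ?a0_gt0.
exists (fun j => w 0 j) => // j; rewrite hw ltr_pwDl ?a0_gt0 //.
by apply: sumr_ge0 => i _; rewrite mulr_ge0 ?a_ge0.
Qed.

Lemma profit_share_sum (w : 'I_m -> R) :
  (forall j, w j = a0 j + \sum_i a i (gd j) * w i) ->
  \sum_i (1 - homdeg i) * w i = 1 - \sum_i a i lab * w i.
Proof.
move=> hw.
have sw : \sum_j w j = 1 + \sum_i (homdeg i - a i lab) * w i.
  under eq_bigr do rewrite hw.
  rewrite big_split /= sum_a0 exchange_big /=; congr (_ + _).
  apply: eq_bigr => i _; rewrite -mulr_suml homdeg_lab_gd; congr (_ * _); ring.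
have -> : \sum_i (1 - homdeg i) * w i =
    \sum_j w j - \sum_i (homdeg i - a i lab) * w i - \sum_i a i lab * w i.
  by rewrite -!sumrB; apply: eq_bigr => i _; ring.
by rewrite sw; ring.
Qed.

Lemma prices_exist (v : 'I_m -> R) : (forall i, 0 < v i) ->
  exists p : 'I_m.+1 -> R, [/\ p lab = 1, forall j, 0 < p j &
    forall i, p (gd i) * prodfun a lam i (factor_demand p v i) = v i].
Proof.
move=> vp.
pose u : 'cV[R]_m := \col_i (ln (lam i (a i)) + \sum_j xlnx (a i j)).
pose D : 'M[R]_m := diag_mx (\row_i (homdeg i - 1)).
pose logp := invmx (Amx - 1%:M) *m (u + D *m \col_i ln (v i)).
have : (Amx - 1%:M) *m logp = u + D *m \col_i ln (v i) by exact: mulKVmx Amx_sub1_unit _.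
clearbody logp => /colP row.
pose p := goodsv 1 (fun i => expR (logp i 0)).
have pp : forall j, 0 < p j.
  by apply: goods_ind => [|j]; rewrite /p ?goodsv_lab ?goodsv_gd ?expR_gt0.
exists p; split=> // [|i]; first by rewrite /p goodsv_lab.
have yp : 0 < p (gd i) * prodfun a lam i (factor_demand p v i).
  rewrite mulr_gt0 // prodfun_expR ?mulr_gt0 ?expR_gt0 // => j.
  exact: factor_demand_gt0.
apply: ln_inj; rewrite ?posrE //; apply/eqP; rewrite -subr_eq0.
rewrite ln_revenue_factor_demand // {1}/p goodsv_lab ln1 mulr0 subr0.
move: (row i); rewrite mulmxBl mul1mx mul_diag_mx !mxE /p goodsv_gd expRK => <-.
rewrite subr_eq0; apply/eqP; congr (_ - _); apply: eq_bigr => j _.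
by rewrite !mxE goodsv_gd expRK.
Qed.

(* With [t j] the spending on input [j] relative to its revenue share, concavity
   of [ln] bounds the revenue at [z] by [v i * (\sum_j a i j * t j + 1 - homdeg i)]. *)
Lemma revenue_le_cost p v i z : (forall j, 0 < p j) -> 0 < v i ->
  p (gd i) * prodfun a lam i (factor_demand p v i) = v i -> nonneg z ->
  p (gd i) * prodfun a lam i z <= dotp p z + (1 - homdeg i) * v i.
Proof.
move=> pp vi pv zn.
have pz0 : 0 <= dotp p z.
  by apply: sumr_ge0 => j _; apply: mulr_ge0; [exact: ltW | exact: zn].
have h1 : 0 <= 1 - homdeg i by rewrite subr_ge0 homdeg_le1.
have [/existsP [j /andP [aj /eqP zj]]|/existsP nz] := boolP [exists j, (0 < a i j) && (z j == 0)].
  rewrite /prodfun (bigD1 j) //= zj powR0 ?gt_eqF // mul0r !mulr0.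
  by apply: addr_ge0 => //; rewrite mulr_ge0 // ltW.
have zp j : 0 < a i j -> 0 < z j.
  move=> aj; rewrite lt_def zn andbT; apply/eqP => zj.
  by apply: nz; exists j; rewrite aj zj eqxx.
pose t j := p j * z j / (a i j * v i).
have tp j : 0 < a i j -> 0 < t j by move=> aj; rewrite divr_gt0 ?mulr_gt0 ?zp.
have tE : \sum_j a i j * ln (z j) =
    \sum_j a i j * ln (factor_demand p v i j) + \sum_j a i j * ln (t j).
  rewrite -big_split; apply: eq_bigr => j _ /=.
  have [->|an] := eqVneq (a i j) 0; first by rewrite !mul0r addr0.
  have aj : 0 < a i j by rewrite lt_def an a_ge0.
  rewrite -mulrDr -lnM ?posrE ?tp ?factor_demand_gt0 //; congr (_ * ln _).
  by rewrite /t /factor_demand; field; rewrite !gt_eqF ?mulr_gt0.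
pose M := \sum_j a i j * t j + (1 - homdeg i).
have M0 : 0 < M.
  have ta : 0 < a i lab * t lab by rewrite mulr_gt0 ?a_lab_gt0 ?(tp _ (a_lab_gt0 i)).
  rewrite /M ltr_wpDr // (sumr_gt0_term (j0 := lab)) // => j.
  have [->|an] := eqVneq (a i j) 0; first by rewrite mul0r.
  by rewrite mulr_ge0 ?a_ge0 // ltW // tp // lt_def an a_ge0.
have E : expR (\sum_j a i j * ln (t j)) <= M.
  rewrite -[leRHS]lnK ?posrE // ler_expR.
  by apply: wsum_ln_le => //; [exact: a_ge0 | rewrite /homdeg; ring].
have vM : v i * M <= dotp p z + (1 - homdeg i) * v i.
  rewrite /M mulrDr [_ * (1 - _)]mulrC lerD2r mulr_sumr; apply: ler_sum => j _.
  have [->|an] := eqVneq (a i j) 0.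
    by rewrite !mul0r mulr0; apply: mulr_ge0; [exact: ltW | exact: zn].
  suff -> : v i * (a i j * t j) = p j * z j by [].
  by rewrite /t; field; rewrite an gt_eqF.
apply: le_trans vM; rewrite -{1}pv prodfun_expR // (prodfun_expR (z := factor_demand p v i)).
  rewrite tE expRD !mulrA; apply: ler_wpM2l E.
  by rewrite !mulr_ge0 // ltW ?expR_gt0.
by move=> j; exact: factor_demand_gt0.
Qed.

Lemma factor_demand_max p v i : (forall j, 0 < p j) -> 0 < v i ->
  p (gd i) * prodfun a lam i (factor_demand p v i) = v i ->
  forall z, nonneg z -> profit p i (prodfun a lam i z) z
    <= profit p i (prodfun a lam i (factor_demand p v i)) (factor_demand p v i).
Proof.
move=> pp vi pv z zn; rewrite /profit pv dotp_factor_demand //.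
have := revenue_le_cost pp vi pv zn; lra.
Qed.

Lemma cd_demand_max p I : (forall j, 0 < p j) -> 0 < I ->
  forall z, nonneg z -> dotp p z <= I -> utility a0 z <= utility a0 (cd_demand p I).
Proof.
move=> pp I0 z zn hb; set x0 := cd_demand p I.
have x0E j : x0 (gd j) = a0 j * I / p (gd j) by rewrite /x0 /cd_demand goodsv_gd.
have [/existsP [j /eqP zj]|/existsP nz] := boolP [exists j, z (gd j) == 0].
  by rewrite (utility_eq0 zj) utility_ge0.
have zp j : 0 < z (gd j).
  by rewrite lt_def zn andbT; apply/eqP => zj; apply: nz; exists j; rewrite zj.
have xp j : 0 < x0 (gd j) by rewrite x0E divr_gt0 ?mulr_gt0 ?a0_gt0.
rewrite (utility_expR zp) (utility_expR xp) ler_expR.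
pose t j := z (gd j) / x0 (gd j).
have tp j : 0 < t j by rewrite divr_gt0.
have tE : \sum_j a0 j * ln (z (gd j)) =
    \sum_j a0 j * ln (x0 (gd j)) + \sum_j a0 j * ln (t j).
  rewrite -big_split; apply: eq_bigr => j _ /=.
  by rewrite -mulrDr -lnM ?posrE // /t mulrCA mulfV ?gt_eqF // mulr1.
have tS : \sum_j a0 j * t j <= 1.
  have -> : \sum_j a0 j * t j = (\sum_j p (gd j) * z (gd j)) / I.
    rewrite mulr_suml; apply: eq_bigr => j _; rewrite /t x0E; field.
    by rewrite !gt_eqF ?a0_gt0.
  rewrite ler_pdivrMr // mul1r; apply: le_trans hb; rewrite dotpE lerDr.
  by apply: mulr_ge0; [exact: ltW | exact: zn].
have M0 : 0 < \sum_j a0 j * t j + 0.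
  rewrite addr0 (sumr_gt0_term (j0 := Ordinal m_gt0)) => [//|j|].
  - by rewrite mulr_ge0 // ltW ?a0_gt0.
  - by rewrite mulr_gt0 ?a0_gt0.
have := wsum_ln_le (fun j => ltW (a0_gt0 j)) (lexx 0) _ (fun j _ => tp j) M0.
rewrite !addr0 sum_a0 => /(_ erefl) G.
have := le_trans G (ln_le0 tS); rewrite tE; lra.
Qed.

Lemma equilibrium_of_revenues p (v : 'I_m -> R) I :
  (forall j, 0 < p j) -> p lab = 1 -> (forall i, 0 < v i) ->
  (forall i, p (gd i) * prodfun a lam i (factor_demand p v i) = v i) ->
  (forall j, v j = a0 j * I + \sum_i a i (gd j) * v i) ->
  \sum_i a i lab * v i = 1 -> 1 + \sum_i (1 - homdeg i) * v i = I ->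
  equilibrium a0 a lam p (cd_demand p I) (factor_demand p v)
    (fun i => prodfun a lam i (factor_demand p v i)).
Proof.
move=> pp p1 vp pv veq vlab vinc.
have I0 : 0 < I.
  rewrite -vinc ltr_pwDl // sumr_ge0 // => i _.
  by rewrite mulr_ge0 ?subr_ge0 ?homdeg_le1 // ltW.
have incE : income p (factor_demand p v) (fun i => prodfun a lam i (factor_demand p v i)) = I.
  rewrite /income p1 -vinc; congr (_ + _); apply: eq_bigr => i _.
  by rewrite /profit pv dotp_factor_demand //; ring.
split.
- split=> [j|]; first exact: ltW.
  split=> [|i j]; last by rewrite divr_ge0 ?mulr_ge0 ?a_ge0 ?ltW.
  apply: goods_ind => [|j]; rewrite /cd_demand ?goodsv_lab ?goodsv_gd //.
  by rewrite ltW // divr_gt0 ?mulr_gt0 ?a0_gt0.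
- by split=> // i z; exact: factor_demand_max.
- cbv zeta; rewrite -/(income _ _ _) incE dotp_cd_demand //.
  by split=> //; exact: cd_demand_max.
- split=> [|j].
    rewrite /cd_demand goodsv_lab add0r -vlab; apply: eq_bigr => i _.
    by rewrite /factor_demand p1 divr1.
  rewrite /cd_demand goodsv_gd -[prodfun _ _ _ _](mulKf (lt0r_neq0 (pp (gd j)))) pv veq.
  rewrite mulrDr mulr_sumr mulrC; congr (_ + _); apply: eq_bigr => i _.
  by rewrite /factor_demand mulrC mulrA.
Qed.

Lemma equilibrium_exists : exists p x0 x y, equilibrium a0 a lam p x0 x y.
Proof.
have [w wp hw] := revenue_share_exists.
pose L := \sum_i a i lab * w i.
have L0 : 0 < L.
  rewrite (sumr_gt0_term (j0 := Ordinal m_gt0)) => [//|i|].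
  - by rewrite mulr_ge0 ?a_ge0 ?ltW.
  - by rewrite mulr_gt0 ?a_lab_gt0.
pose v i := w i / L.
have vp i : 0 < v i by rewrite divr_gt0.
have [p [p1 pp pv]] := prices_exist vp.
exists p, (cd_demand p L^-1), (factor_demand p v), (fun i => prodfun a lam i (factor_demand p v i)).
apply: equilibrium_of_revenues => //.
- move=> j; rewrite /v hw mulrDl mulr_suml; congr (_ + _).
  by apply: eq_bigr => i _; rewrite mulrA.
- by rewrite /v; under eq_bigr do rewrite mulrA; rewrite -mulr_suml mulfV ?gt_eqF.
- rewrite /v; under eq_bigr do rewrite mulrA; rewrite -mulr_suml profit_share_sum // -/L.
  by field; rewrite gt_eqF.
Qed.

End Economy.

Theorem mainTheorem2 (R : realType) (m k : nat) (sec : 'I_m -> 'I_k)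
  (a0 : 'I_m -> R) (a : 'I_m -> 'I_m.+1 -> R) (b0 : 'I_m -> R) (b : 'I_m -> 'I_k -> R)
  (lam : 'I_m -> ('I_m.+1 -> R) -> R) :
  assumption1 a0 b0 b ->
  admissible sec a b0 b ->
  (forall i, 0 < lam i (a i)) ->
  (exists p x0 x y, equilibrium a0 a lam p x0 x y) /\
  (forall p x0 x y p' x0' x' y',
     equilibrium a0 a lam p x0 x y -> equilibrium a0 a lam p' x0' x' y' ->
     exists2 c : R, 0 < c &
       [/\ forall j, p' j = c * p j, x0' = x0, x' = x & y' = y]) /\
  (forall p x0 x y, equilibrium a0 a lam p x0 x y -> p lab = 1 ->
     let v := fun i : 'I_m => p (gd i) * y i in
     let eps := fun i : 'I_m => 1 - \sum_(j < m.+1) a i j in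
     [/\ (forall j : 'I_m,
            v j = a0 j + a0 j * \sum_(i < m) eps i * v i + \sum_(i < m) a i (gd j) * v i)
         /\ \sum_(i < m) a i lab * v i = 1,
         (forall i : 'I_m,
            profit p i (y i) (x i) = (1 - \sum_(j < m.+1) a i j) * v i
            /\ profit p i (y i) (x i) = (1 - (b0 i + \sum_(l < k) b i l)) * v i) &
         let A : 'M[R]_m := \matrix_(i, j) a i (gd j) in
         let u : 'cV[R]_m :=
           \col_i (ln (lam i (a i)) + \sum_(j < m.+1) xlnx (a i j)) in
         let D : 'M[R]_m := diag_mx (\row_i (\sum_(j < m.+1) a i j - 1)) in
         let logp : 'cV[R]_m := \col_i ln (p (gd i)) in
         let logv : 'cV[R]_m := \col_i ln (v i) in
         (A - 1%:M) \in unitmx /\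
         logp = invmx (A - 1%:M) *m u + invmx (A - 1%:M) *m D *m logv]).
Proof.
move=> HA1 HAd Hlam; split; first exact: equilibrium_exists HA1 HAd Hlam.
split; first exact: equilibrium_unique HA1 HAd Hlam.
exact: normalized_equilibrium_props HA1 HAd Hlam.
Qed.
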